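(* Let $\mathcal{S}$ be a state space, let $\mathsf{N}^{(1)},\ldots,\mathsf{N}^{(l)}$ be measurements on $\mathcal{S}$ with common finite outcome set $\Omega_1$, let $(p_i)_{i=1}^l$ be a probability distribution, and let $\mathsf{M}^{(2)},\ldots,\mathsf{M}^{(k)}$ be measurements on $\mathcal{S}$ with finite outcome sets $\Omega_2,\ldots,\Omega_k$. Then $$\bar P\Big(\sum_{i=1}^l p_i\mathsf{N}^{(i)},\mathsf{M}^{(2)},\ldots,\mathsf{M}^{(k)}\Big)\le\sum_{i=1}^l p_i\,\bar P(\mathsf{N}^{(i)},\mathsf{M}^{(2)},\ldots,\mathsf{M}^{(k)})\le\max_j\bar P(\mathsf{N}^{(j)},\mathsf{M}^{(2)},\ldots,\mathsf{M}^{(k)}).$$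
   Context: General probabilistic theory setting: a state space $\mathcal{S}$ is a compact convex subset of a finite-dimensional real vector space, embedded as a base of a closed generating proper cone in a vector space $V$, with unit effect $u$. Effects are linear functionals $e$ on $V$ with $0\le e\le1$ on $\mathcal{S}$; $\|f\|=\max_{s\in\mathcal{S}}|f(s)|$. A measurement with finite outcome set $\Omega$ is a map $x\mapsto\mathsf{M}_x$ to effects with $\sum_x\mathsf{M}_x=u$; the mixture $\sum_ip_i\mathsf{N}^{(i)}$ has effects $\sum_ip_i\mathsf{N}^{(i)}_x$. For measurements $\mathsf{M}^{(1)},\ldots,\mathsf{M}^{(k)}$ with outcome sets of sizes $m_1,\ldots,m_k$, the random access test success probability is $\bar P(\mathsf{M}^{(1)},\ldots,\mathsf{M}^{(k)})=\frac{1}{k\,m_1\cdots m_k}\sum_{(x_1,\ldots,x_k)}\|\mathsf{M}^{(1)}_{x_1}+\cdots+\mathsf{M}^{(k)}_{x_k}\|$. *)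

From HB Require Import structures.
From mathcomp Require Import all_boot all_order all_algebra.
From mathcomp Require Import all_classical all_reals all_analysis.
Set Implicit Arguments. Unset Strict Implicit. Unset Printing Implicit Defensive.
Import Order.TTheory GRing.Theory Num.Theory.
Import numFieldNormedType.Exports.
Local Open Scope classical_set_scope.
Local Open Scope ring_scope.

Section GPT.
Variables (R : realType) (n : nat).

(* V = R^n as column vectors; linear functionals on V are row vectors. *)
Definition ev (f : 'rV[R]_n) (s : 'cV[R]_n) : R := (f *m s) 0 0.

Definition convex_set (S : set 'cV[R]_n) : Prop :=
  forall x y (t : R), S x -> S y -> 0 <= t <= 1 -> S (t *: x + (1 - t) *: y).

Definition cone_of (S : set 'cV[R]_n) : set 'cV[R]_n :=
  [set v | exists t, exists2 s, S s & 0 <= t /\ v = t *: s].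

Definition state_space (S : set 'cV[R]_n) (u : 'rV[R]_n) : Prop :=
  [/\ (S !=set0) /\ compact S /\ convex_set S,
      closed (cone_of S),
      (forall v, exists a b, cone_of S a /\ cone_of S b /\ v = a - b),
      (forall v, cone_of S v -> cone_of S (- v) -> v = 0)
    & (forall s, S s -> ev u s = 1)].

Definition effect (S : set 'cV[R]_n) (e : 'rV[R]_n) : Prop :=
  forall s, S s -> 0 <= ev e s <= 1.

Definition measurement (S : set 'cV[R]_n) (u : 'rV[R]_n) (m : nat)
  (M : 'I_m -> 'rV[R]_n) : Prop :=
  (forall x, effect S (M x)) /\ \sum_(x < m) M x = u.

(* ||f|| = max_{s in S} |f(s)|  (the max exists by compactness of S) *)
Definition gnorm (S : set 'cV[R]_n) (f : 'rV[R]_n) : R :=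
  sup [set r | exists2 s, S s & r = `|ev f s|].

Definition mixture (l m : nat) (p : 'I_l -> R) (N : 'I_l -> 'I_m -> 'rV[R]_n)
  : 'I_m -> 'rV[R]_n := fun x => \sum_(i < l) p i *: N i x.

(* random access test success probability of K measurements M i with
   outcome sets 'I_(m i) *)
Definition Pbar (S : set 'cV[R]_n) (K : nat) (m : 'I_K -> nat)
  (M : forall i : 'I_K, 'I_(m i) -> 'rV[R]_n) : R :=
  (K%:R * \prod_(i < K) (m i)%:R)^-1 *
  \sum_(x : {dffun forall i : 'I_K, 'I_(m i)}) gnorm S (\sum_(i < K) M i (x i)).

(* prepending a measurement to a family of measurements *)
Definition mcons (k : nat) (m1 : nat) (m : 'I_k -> nat) (i : 'I_k.+1) : nat :=
  match unlift ord0 i with Some j => m j | None => m1 end.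

Definition fcons (k : nat) (m1 : nat) (m : 'I_k -> nat)
  (F : 'I_m1 -> 'rV[R]_n) (Ms : forall j : 'I_k, 'I_(m j) -> 'rV[R]_n)
  (i : 'I_k.+1) : 'I_(mcons m1 m i) -> 'rV[R]_n :=
  match unlift ord0 i as o
    return 'I_(match o with Some j => m j | None => m1 end) -> 'rV[R]_n
  with Some j => Ms j | None => F end.

End GPT.

From Pilot Require Import Defs.
From HB Require Import structures.
From mathcomp Require Import all_boot all_order all_algebra.
From mathcomp Require Import all_classical all_reals all_analysis.
Import Order.TTheory GRing.Theory Num.Theory.
Import numFieldNormedType.Exports.
Set Implicit Arguments. Unset Strict Implicit. Unset Printing Implicit Defensive.
Local Open Scope classical_set_scope.
Local Open Scope ring_scope.

(* The norm [gnorm S f = sup_{s in S} |f(s)|] is a supremum of absolute values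
   of linear functionals, hence sublinear in [f].  Each summand of [Pbar] is the
   norm of a sum of effects that depends linearly on the first measurement, so
   [Pbar] is convex in that measurement.  A convex combination is in turn
   bounded by the largest of its terms. *)

Lemma entry_le_mx_norm (R : realType) (n : nat) (s : 'cV[R]_n) (j : 'I_n) :
  `|s j 0| <= `|s|.
Proof.
rewrite [`|s|]mx_normrE.
exact: (le_bigmax _ (fun ij : 'I_n * 'I_1 => `|s ij.1 ij.2|) (j, 0)).
Qed.

Lemma ev_bounded_on_compact (R : realType) (n : nat) (S : set 'cV[R]_n)
    (f : 'rV[R]_n) :
  compact S -> exists C, forall s, S s -> `|ev f s| <= C.
Proof.
move=> cS; have [M [_ SM]] := compact_bounded cS.
have S_le_M1 := SM (M + 1) ltac:(by rewrite ltrDl ltr01).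
exists (\sum_j `|f 0 j| * (M + 1)) => s Ss.
rewrite /ev mxE (le_trans (ler_norm_sum _ _ _)) //.
apply: ler_sum => j _; rewrite normrM ler_wpM2l //.
exact: le_trans (entry_le_mx_norm s j) (S_le_M1 s Ss).
Qed.

(* [Defs.gnorm] is qualified because [gnorm] alone names a fingroup lemma. *)
Section GNorm.
Variables (R : realType) (n : nat) (S : set 'cV[R]_n).
Hypotheses (S_compact : compact S) (S_neq0 : S !=set0).

Lemma ev_le_gnorm (f : 'rV[R]_n) (s : 'cV[R]_n) : S s -> `|ev f s| <= Defs.gnorm S f.
Proof.
move=> Ss; have [C fC] := ev_bounded_on_compact f S_compact.
apply: ub_le_sup; last by exists s.
by exists C => _ [s' Ss' ->]; exact: fC.
Qed.

Lemma gnorm_le (f : 'rV[R]_n) (C : R) :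
  (forall s, S s -> `|ev f s| <= C) -> Defs.gnorm S f <= C.
Proof.
move=> fC; apply: ge_sup; last by move=> _ [s Ss ->]; exact: fC.
by case: S_neq0 => s Ss; exists `|ev f s|, s.
Qed.

Lemma gnorm_sum_le (l : nat) (p : 'I_l -> R) (g : 'I_l -> 'rV[R]_n) :
  (forall i, 0 <= p i) ->
  Defs.gnorm S (\sum_i p i *: g i) <= \sum_i p i * Defs.gnorm S (g i).
Proof.
move=> p_ge0; apply: gnorm_le => s Ss.
rewrite /ev mulmx_suml summxE (le_trans (ler_norm_sum _ _ _)) //.
apply: ler_sum => i _.
by rewrite -scalemxAl mxE normrM ger0_norm // ler_wpM2l // ev_le_gnorm.
Qed.

Lemma Pbar_le_convex_comb (K l : nat) (m : 'I_K -> nat) (p : 'I_l -> R)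
    (F : 'I_l -> forall i : 'I_K, 'I_(m i) -> 'rV[R]_n)
    (M : forall i : 'I_K, 'I_(m i) -> 'rV[R]_n) :
  (forall j, 0 <= p j) ->
  (forall i x, M i x = \sum_j p j *: F j i x) ->
  Pbar S M <= \sum_j p j * Pbar S (F j).
Proof.
move=> p_ge0 eqM; rewrite /Pbar; set c := _^-1.
have c_ge0 : 0 <= c by rewrite invr_ge0 mulr_ge0 // prodr_ge0.
under [X in _ <= X]eq_bigr => j _ do rewrite mulrCA mulr_sumr.
rewrite -mulr_sumr ler_wpM2l // exchange_big /=.
apply: ler_sum => x _.
have -> : \sum_i M i (x i) = \sum_j p j *: \sum_i F j i (x i).
  under eq_bigr => i _ do rewrite eqM.
  by rewrite exchange_big; apply: eq_bigr => j _; rewrite scaler_sumr.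
exact: gnorm_sum_le.
Qed.

End GNorm.

Lemma fcons_mixture (R : realType) (n l m1 k : nat) (p : 'I_l -> R)
    (N : 'I_l -> 'I_m1 -> 'rV[R]_n) (m : 'I_k -> nat)
    (Ms : forall j : 'I_k, 'I_(m j) -> 'rV[R]_n) :
  \sum_(j < l) p j = 1 ->
  forall i (y : 'I_(mcons m1 m i)),
    fcons (mixture p N) Ms y = \sum_j p j *: fcons (N j) Ms y.
Proof.
move=> p_sum1 i; rewrite /fcons /mcons.
by case: (unlift ord0 i) => [j|] y //=; rewrite -scaler_suml p_sum1 scale1r.
Qed.

Lemma convex_comb_le_bigmax (R : realDomainType) (l : nat) (p a : 'I_l -> R) :
  (forall i, 0 <= p i) -> \sum_i p i = 1 ->
  \sum_i p i * a i <= \big[Num.max/0]_i a i.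
Proof.
move=> p_ge0 p_sum1.
apply: (@le_trans _ _ (\sum_i p i * \big[Num.max/0]_j a j)).
  by apply: ler_sum => i _; rewrite ler_wpM2l // (le_bigmax _ a i).
by rewrite -mulr_suml p_sum1 mul1r.
Qed.

Theorem mainTheorem5 (R : realType) (n : nat) (S : set 'cV[R]_n) (u : 'rV[R]_n)
  (l m1 k : nat) (N : 'I_l -> 'I_m1 -> 'rV[R]_n) (p : 'I_l -> R)
  (m : 'I_k -> nat) (Ms : forall j : 'I_k, 'I_(m j) -> 'rV[R]_n) :
  state_space S u ->
  (forall i, measurement S u (N i)) ->
  (forall i, 0 <= p i) -> \sum_(i < l) p i = 1 ->
  (forall j, measurement S u (Ms j)) ->
  Pbar S (fcons (mixture p N) Ms)
    <= \sum_(i < l) p i * Pbar S (fcons (N i) Ms)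
  /\ \sum_(i < l) p i * Pbar S (fcons (N i) Ms)
    <= \big[Num.max/0]_(j < l) Pbar S (fcons (N j) Ms).
Proof.
move=> [[S_neq0 [S_compact _]] _ _ _ _] _ p_ge0 p_sum1 _; split.
  exact: (Pbar_le_convex_comb S_compact S_neq0 p_ge0 (fcons_mixture N Ms p_sum1)).
exact: convex_comb_le_bigmax.
Qed.
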